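(* Let $\lambda_1>\lambda_2>\lambda_3>0$ and $D=\mathrm{diag}(\lambda_1,\lambda_2,\lambda_3)$. Then: (i) The rotation $\mathrm{diag}(-1,-1,1)$ is the unique global maximum of $\widetilde W_{1,0}(\cdot;D)$ on $SO(3)$. (ii) If $\lambda_1+\lambda_2>2$, the global minima of $\widetilde W_{1,0}(\cdot;D)$ on $SO(3)$ are exactly the two rotations $$\begin{pmatrix}c & \mp\sqrt{1-c^2} & 0\\ \pm\sqrt{1-c^2} & c & 0\\ 0&0&1\end{pmatrix},\qquad c=\frac{2}{\lambda_1+\lambda_2},$$ with minimal value $(\lambda_3-1)^2+\frac12(\lambda_1-\lambda_2)^2$. (iii) If $\lambda_1+\lambda_2\le2$, then $\mathbb I_3$ is the unique global minimum of $\widetilde W_{1,0}(\cdot;D)$ on $SO(3)$.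
   Context: $\mathrm{sym}(Y)=\tfrac12(Y+Y^T)$, $\|Y\|^2=\mathrm{tr}(Y^TY)$ (Frobenius norm). $\widetilde W_{1,0}(R;D)=\|\mathrm{sym}(R^TD-\mathbb I_3)\|^2$ for $R\in SO(3)$. *)

(* matrices over an arbitrary real closed field R
   (the paper's R is the reals; the statement is purely algebraic/order-theoretic). *)
From HB Require Import structures.
From mathcomp Require Import all_boot all_order all_algebra.
Set Implicit Arguments. Unset Strict Implicit. Unset Printing Implicit Defensive.
Import Order.TTheory GRing.Theory Num.Theory.
Local Open Scope ring_scope.

Definition mx3 {R : rcfType} (a b c d e f g h k : R) : 'M[R]_3 :=
  \matrix_(i < 3, j < 3)
    nth 0 (nth [::] [:: [:: a; b; c]; [:: d; e; f]; [:: g; h; k]] i) j.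

Definition symm {R : rcfType} (Y : 'M[R]_3) : 'M[R]_3 := 2^-1 *: (Y + Y^T).

Definition frob2 {R : rcfType} (Y : 'M[R]_3) : R := \tr (Y^T *m Y).

Definition W10 {R : rcfType} (D Q : 'M[R]_3) : R :=
  frob2 (symm (Q^T *m D - 1%:M)).

Definition SO3 {R : rcfType} (Q : 'M[R]_3) : Prop :=
  Q^T *m Q = 1%:M /\ \det Q = 1.

Definition isGlobalMin {R : rcfType} (D Q : 'M[R]_3) : Prop :=
  SO3 Q /\ forall S : 'M[R]_3, SO3 S -> W10 D Q <= W10 D S.

Definition isGlobalMax {R : rcfType} (D Q : 'M[R]_3) : Prop :=
  SO3 Q /\ forall S : 'M[R]_3, SO3 S -> W10 D S <= W10 D Q.

From HB Require Import structures.
From mathcomp Require Import all_boot all_order all_algebra.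
From mathcomp Require Import ring lra.
Set Implicit Arguments. Unset Strict Implicit. Unset Printing Implicit Defensive.
Import Order.TTheory GRing.Theory Num.Theory.
Local Open Scope ring_scope.

(* For a rotation Q with diagonal (x, y, z), expanding the norm and using that each
   diagonal entry of a rotation equals its cofactor shows that W(Q) = Wdiag(x, y, z)
   depends on the diagonal only (W10_rot).  The diagonal of a rotation lies in the tetrahedron
   spanned by the diagonals of diag(+-1,+-1,+-1) (rot_diag_tetra); in quaternion terms
   its barycentric coordinates are the squares q_i^2.  On this tetrahedron, each claimed
   extremal value differs from Wdiag by an explicit sum of nonnegative terms (the "gap"
   identities), which yields the bound and pins down the point where it is attained. *)

Section Mx3Calculus.
Variable R : rcfType.
Implicit Types (a b c d e f g h k x : R) (A : 'M[R]_3).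

Definition i0 : 'I_3 := @Ordinal 3 0 isT.
Definition i1 : 'I_3 := @Ordinal 3 1 isT.
Definition i2 : 'I_3 := @Ordinal 3 2 isT.

Local Ltac mx3_entrywise :=
  apply/matrixP => - [[|[|[|i]]] Hi] [[|[|[|j]]] Hj] //; rewrite /mx3 !mxE.

Lemma mx3E A : A = mx3 (A i0 i0) (A i0 i1) (A i0 i2)
  (A i1 i0) (A i1 i1) (A i1 i2) (A i2 i0) (A i2 i1) (A i2 i2).
Proof. by mx3_entrywise; congr (A _ _); apply: val_inj. Qed.

Lemma mx3_ind (P : 'M[R]_3 -> Prop) :
  (forall a b c d e f g h k, P (mx3 a b c d e f g h k)) -> forall A, P A.
Proof. by move=> HP A; rewrite (mx3E A). Qed.

Lemma mx3_inj a b c d e f g h k a' b' c' d' e' f' g' h' k' :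
  mx3 a b c d e f g h k = mx3 a' b' c' d' e' f' g' h' k' ->
  [/\ a = a', b = b', c = c', d = d'
    & [/\ e = e', f = f', g = g', h = h' & k = k']].
Proof.
move=> E; have F i j := congr1 (fun M : 'M[R]_3 => M i j) E.
move: (F i0 i0) (F i0 i1) (F i0 i2) (F i1 i0) (F i1 i1) (F i1 i2) (F i2 i0)
  (F i2 i1) (F i2 i2).
by rewrite !mxE.
Qed.

Lemma tr_mx3 a b c d e f g h k :
  (mx3 a b c d e f g h k)^T = mx3 a d g b e h c f k.
Proof. by mx3_entrywise. Qed.

Lemma mul_mx3 a b c d e f g h k a' b' c' d' e' f' g' h' k' :
  mx3 a b c d e f g h k *m mx3 a' b' c' d' e' f' g' h' k' =
  mx3 (a*a'+b*d'+c*g') (a*b'+b*e'+c*h') (a*c'+b*f'+c*k')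
      (d*a'+e*d'+f*g') (d*b'+e*e'+f*h') (d*c'+e*f'+f*k')
      (g*a'+h*d'+k*g') (g*b'+h*e'+k*h') (g*c'+h*f'+k*k').
Proof.
apply/matrixP => i j; rewrite /mx3 !mxE !big_ord_recl big_ord0 !mxE /= addr0.
by case: i => [[|[|[|i]]]] // Hi; case: j => [[|[|[|j]]]] // Hj; rewrite /= addrA.
Qed.

Lemma add_mx3 a b c d e f g h k a' b' c' d' e' f' g' h' k' :
  mx3 a b c d e f g h k + mx3 a' b' c' d' e' f' g' h' k' =
  mx3 (a+a') (b+b') (c+c') (d+d') (e+e') (f+f') (g+g') (h+h') (k+k').
Proof. by mx3_entrywise. Qed.

Lemma opp_mx3 a b c d e f g h k :
  - mx3 a b c d e f g h k = mx3 (-a) (-b) (-c) (-d) (-e) (-f) (-g) (-h) (-k).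
Proof. by mx3_entrywise. Qed.

Lemma scale_mx3 x a b c d e f g h k :
  x *: mx3 a b c d e f g h k =
  mx3 (x*a) (x*b) (x*c) (x*d) (x*e) (x*f) (x*g) (x*h) (x*k).
Proof. by mx3_entrywise. Qed.

Lemma one_mx3 : (1%:M : 'M[R]_3) = mx3 1 0 0 0 1 0 0 0 1.
Proof. by mx3_entrywise. Qed.

Lemma trace_mx3 a b c d e f g h k : \tr (mx3 a b c d e f g h k) = a + e + k.
Proof. by rewrite /mxtrace !big_ord_recl big_ord0 !mxE /= addr0 addrA. Qed.

Lemma det_mx3 a b c d e f g h k : \det (mx3 a b c d e f g h k) =
  a*(e*k - f*h) - b*(d*k - f*g) + c*(d*h - e*g).
Proof.
rewrite (expand_det_row _ ord0) !big_ord_recl big_ord0 /cofactor.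
rewrite !(expand_det_row _ ord0) !big_ord_recl !big_ord0 /cofactor !det_mx11.
by rewrite !mxE /bump /=; ring.
Qed.

End Mx3Calculus.

Section Rotations.
Variable R : rcfType.
Implicit Types (a b c d e f g h k x y z : R).

Lemma sum_sqr3_eq0 x y z : x^+2 + y^+2 + z^+2 = 0 -> [/\ x = 0, y = 0 & z = 0].
Proof.
move=> H; have := sqr_ge0 x; have := sqr_ge0 y; have := sqr_ge0 z => hz hy hx.
by split; apply/eqP; rewrite -sqrf_eq0; apply/eqP; lra.
Qed.

Lemma SO3_mx3 a b c d e f g h k :
  SO3 (mx3 a b c d e f g h k) <->
  [/\ a*a+d*d+g*g = 1, b*b+e*e+h*h = 1, c*c+f*f+k*k = 1, a*b+d*e+g*h = 0
    & [/\ a*c+d*f+g*k = 0, b*c+e*f+h*k = 0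
    & a*(e*k - f*h) - b*(d*k - f*g) + c*(d*h - e*g) = 1]].
Proof.
rewrite /SO3 tr_mx3 mul_mx3 one_mx3 det_mx3; split.
  by case=> /mx3_inj[c11 c12 c13 _ [c22 c23 _ _ c33]] hd.
by case=> c11 c22 c33 c12 [c13 c23 hd]; split=> //; congr mx3; lra.
Qed.

(* The rows of a rotation are orthonormal too, since Q^T Q = 1 implies Q Q^T = 1. *)
Lemma SO3_rows_mx3 a b c d e f g h k : SO3 (mx3 a b c d e f g h k) ->
  [/\ a*a+b*b+c*c = 1, d*d+e*e+f*f = 1, g*g+h*h+k*k = 1, a*d+b*e+c*f = 0
    & a*g+b*h+c*k = 0 /\ d*g+e*h+f*k = 0].
Proof.
case=> /mulmx1C; rewrite tr_mx3 mul_mx3 one_mx3.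
by case/mx3_inj=> r11 r12 r13 _ [r22 r23 _ _ r33].
Qed.

(* If (a,b,c), (d,e,f) are orthonormal, (g,h,k) is a unit vector and the determinant
   is 1, then (g,h,k) is the cross product of the first two rows: by Lagrange's
   identity the cross product is a unit vector, and its dot product with (g,h,k)
   is the determinant. *)
Lemma third_row_cross a b c d e f g h k :
  a*a+b*b+c*c = 1 -> d*d+e*e+f*f = 1 -> g*g+h*h+k*k = 1 -> a*d+b*e+c*f = 0 ->
  a*(e*k - f*h) - b*(d*k - f*g) + c*(d*h - e*g) = 1 ->
  [/\ g = b*f - c*e, h = c*d - a*f & k = a*e - b*d].
Proof.
move=> r1 r2 r3 r12 hdet.
have lagrange : (a*a+b*b+c*c)*(d*d+e*e+f*f) - (a*d+b*e+c*f)^+2 = 1.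
  by rewrite r1 r2 r12; ring.
have [/eqP + /eqP + /eqP] :=
  sum_sqr3_eq0 (x := g - (b*f - c*e)) (y := h - (c*d - a*f)) (z := k - (a*e - b*d))
    ltac:(lra).
by rewrite !subr_eq0 => /eqP -> /eqP -> /eqP ->.
Qed.

Lemma rot_diag_cofactor a b c d e f g h k : SO3 (mx3 a b c d e f g h k) ->
  [/\ a = e*k - f*h, e = k*a - g*c & k = a*e - b*d].
Proof.
move=> HQ; have [r1 r2 r3 r12 [r13 r23]] := SO3_rows_mx3 HQ.
have [_ _ _ _ [_ _ hdet]] := (SO3_mx3 a b c d e f g h k).1 HQ.
have [_ _ ck] := third_row_cross r1 r2 r3 r12 hdet.
have [ca _ _] := third_row_cross r2 r3 r1 ltac:(lra) ltac:(lra).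
by have [_ ce _] := third_row_cross r3 r1 r2 ltac:(lra) ltac:(lra).
Qed.

(* Four reals with pairwise nonnegative products and positive sum are nonnegative:
   p * (p+q+r+t) is a sum of nonnegative terms. *)
Lemma nonneg_of_pairwise_prod (p q r t : R) : 0 < p + q + r + t ->
  0 <= p*q -> 0 <= p*r -> 0 <= p*t -> 0 <= q*r -> 0 <= q*t -> 0 <= r*t ->
  [/\ 0 <= p, 0 <= q, 0 <= r & 0 <= t].
Proof.
move=> hs pq pr pt qr qt rt.
have sq (u : R) : 0 <= u * u by rewrite -expr2 sqr_ge0.
split; rewrite -(pmulr_lge0 _ hs).
- have := sq p; lra.
- have := sq q; lra.
- have := sq r; lra.
- have := sq t; lra.
Qed.

(* For the rotation of a unit quaternion (q0,q1,q2,q3) with diagonal (x, y, z),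
   these are 4 q0^2, 4 q1^2, 4 q2^2 and 4 q3^2; a quarter of them are the barycentric
   coordinates of (x, y, z) with respect to the tetrahedron with vertices (1,1,1),
   (1,-1,-1), (-1,1,-1) and (-1,-1,1). *)
Definition wt0 x y z : R := 1 + x + y + z.
Definition wt1 x y z : R := 1 + x - y - z.
Definition wt2 x y z : R := 1 - x + y - z.
Definition wt3 x y z : R := 1 - x - y + z.

Definition tetra x y z : Prop :=
  [/\ 0 <= wt0 x y z, 0 <= wt1 x y z, 0 <= wt2 x y z & 0 <= wt3 x y z].

(* The diagonal of a rotation lies in the tetrahedron: the pairwise products of the
   four quantities are squares of sums or differences of off-diagonal entries. *)
Lemma rot_diag_tetra a b c d e f g h k :
  SO3 (mx3 a b c d e f g h k) -> tetra a e k.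
Proof.
move=> HQ; have [c1 c2 c3 _ _] := (SO3_mx3 a b c d e f g h k).1 HQ.
have [r1 r2 r3 r12 [r13 r23]] := SO3_rows_mx3 HQ.
have [ca ce ck] := rot_diag_cofactor HQ.
have [] // :=
  nonneg_of_pairwise_prod (p:=1+a+e+k) (q:=1+a-e-k) (r:=1-a+e-k) (t:=1-a-e+k).
- lra.
- have -> : (1+a+e+k)*(1+a-e-k) = (h-f)^+2 by lra.
  exact: sqr_ge0.
- have -> : (1+a+e+k)*(1-a+e-k) = (c-g)^+2 by lra.
  exact: sqr_ge0.
- have -> : (1+a+e+k)*(1-a-e+k) = (d-b)^+2 by lra.
  exact: sqr_ge0.
- have -> : (1+a-e-k)*(1-a+e-k) = (b+d)^+2 by lra.
  exact: sqr_ge0.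
- have -> : (1+a-e-k)*(1-a-e+k) = (c+g)^+2 by lra.
  exact: sqr_ge0.
- have -> : (1-a+e-k)*(1-a-e+k) = (f+h)^+2 by lra.
  exact: sqr_ge0.
Qed.

End Rotations.

Section RotationsFromDiagonal.
Variable R : rcfType.
Implicit Types (a b c d e f g h k x y : R).

Lemma sum_sqr2_eq0 x y : x^+2 + y^+2 = 0 -> x = 0 /\ y = 0.
Proof.
move=> H; suff [] : [/\ x = 0, y = 0 & (0:R) = 0] by [].
by apply: sum_sqr3_eq0; rewrite expr0n addr0.
Qed.

Lemma rot_diag_unit a b c d e f g h k : SO3 (mx3 a b c d e f g h k) ->
  a^+2 = 1 -> e^+2 = 1 -> k^+2 = 1 ->
  mx3 a b c d e f g h k = mx3 a 0 0 0 e 0 0 0 k.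
Proof.
move=> HQ ha he hk; have [r1 r2 r3 _ _] := SO3_rows_mx3 HQ.
have [-> ->] : b = 0 /\ c = 0 by apply: sum_sqr2_eq0; lra.
have [-> ->] : d = 0 /\ f = 0 by apply: sum_sqr2_eq0; lra.
by have [-> ->] : g = 0 /\ h = 0 by apply: sum_sqr2_eq0; lra.
Qed.

Lemma rot_axis3 a b c d e f g h k :
  SO3 (mx3 a b c d e f g h k) -> e = a -> k = 1 ->
  mx3 a b c d e f g h k =
    mx3 a (- Num.sqrt (1 - a^+2)) 0 (Num.sqrt (1 - a^+2)) a 0 0 0 1 \/
  mx3 a b c d e f g h k =
    mx3 a (Num.sqrt (1 - a^+2)) 0 (- Num.sqrt (1 - a^+2)) a 0 0 0 1.
Proof.
move=> HQ ea k1; subst e k.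
have [_ _ c3 _ _] := (SO3_mx3 a b c d a f g h 1).1 HQ.
have [r1 r2 r3 _ _] := SO3_rows_mx3 HQ.
have [_ _ ck] := rot_diag_cofactor HQ.
have [-> ->] : g = 0 /\ h = 0 by apply: sum_sqr2_eq0; lra.
have [cz fz] : c = 0 /\ f = 0 by apply: sum_sqr2_eq0; lra.
rewrite {}cz {}fz in r1 r2 *.
have -> : d = - b.
  have /eqP : (b + d)^+2 = 0 by lra.
  by rewrite sqrf_eq0 addrC addr_eq0 => /eqP.
have : b^+2 == Num.sqrt (1 - a^+2) ^+2.
  by rewrite sqr_sqrtr; [apply/eqP; lra | have := sqr_ge0 b; lra].
by rewrite eqf_sqr => /orP[] /eqP ->; [right | left; rewrite opprK].
Qed.

Lemma SO3_axis3 a x : a^+2 + x^+2 = 1 ->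
  SO3 (mx3 a (- x) 0 x a 0 0 0 1) /\ SO3 (mx3 a x 0 (- x) a 0 0 0 1).
Proof. by move=> hax; split; apply/SO3_mx3; (split; [lra.. | split; lra]). Qed.

End RotationsFromDiagonal.

Section DiagonalTarget.
Variables (R : rcfType) (l1 l2 l3 : R).
Implicit Types (a b c d e f g h k x y z : R).
Local Notation D := (mx3 l1 0 0 0 l2 0 0 0 l3).

Lemma W10_diag_mx3 a b c d e f g h k : W10 D (mx3 a b c d e f g h k) =
  (l1 * a - 1)^+2 + (l2 * e - 1)^+2 + (l3 * k - 1)^+2 +
  2^-1 * ((l1 * b + l2 * d)^+2 + (l1 * c + l3 * g)^+2 + (l2 * f + l3 * h)^+2).
Proof.
rewrite /W10 /symm /frob2 tr_mx3 mul_mx3 one_mx3 opp_mx3 add_mx3 tr_mx3 add_mx3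
  scale_mx3 tr_mx3 mul_mx3 trace_mx3.
have h2 : (2:R) != 0 by rewrite pnatr_eq0.
by field.
Qed.

(* On rotations, W10 D only depends on the diagonal (x, y, z) of the rotation. *)
Definition Wdiag x y z : R :=
  2^-1 * (l1^+2 + l2^+2 + l3^+2) + 2^-1 * (l1 * x + l2 * y + l3 * z - 2)^+2 + 1
  - (l2 * l3 * x + l1 * l3 * y + l1 * l2 * z).

Lemma W10_rot a b c d e f g h k : SO3 (mx3 a b c d e f g h k) ->
  W10 D (mx3 a b c d e f g h k) = Wdiag a e k.
Proof.
move=> HQ; have [r1 r2 r3 _ _] := SO3_rows_mx3 HQ.
have [ca ce ck] := rot_diag_cofactor HQ.
have f1 : l1^+2 * (a*a+b*b+c*c) = l1^+2 by rewrite r1 mulr1.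
have f2 : l2^+2 * (d*d+e*e+f*f) = l2^+2 by rewrite r2 mulr1.
have f3 : l3^+2 * (g*g+h*h+k*k) = l3^+2 by rewrite r3 mulr1.
have f4 : l1 * l2 * k = l1 * l2 * (a*e - b*d) by rewrite -ck.
have f5 : l1 * l3 * e = l1 * l3 * (k*a - g*c) by rewrite -ce.
have f6 : l2 * l3 * a = l2 * l3 * (e*k - f*h) by rewrite -ca.
rewrite W10_diag_mx3 /Wdiag; lra.
Qed.

(* Gap to the maximal value (l1+1)^2 + (l2+1)^2 + (l3-1)^2 = Wdiag(-1,-1,1). *)
Lemma Wdiag_max_gap x y z :
  (l1 + 1)^+2 + (l2 + 1)^+2 + (l3 - 1)^+2 - Wdiag x y z =
  (l1 + l2) * wt0 x y z + (l1 - l3) * wt1 x y z + (l2 - l3) * wt2 x y z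
  + 8^-1 * (wt0 x y z * wt1 x y z * (l2 + l3)^+2
           + wt0 x y z * wt2 x y z * (l1 + l3)^+2
           + wt0 x y z * wt3 x y z * (l1 + l2)^+2
           + wt1 x y z * wt2 x y z * (l1 - l2)^+2
           + wt1 x y z * wt3 x y z * (l1 - l3)^+2
           + wt2 x y z * wt3 x y z * (l2 - l3)^+2).
Proof.
rewrite /Wdiag /wt0 /wt1 /wt2 /wt3.
have h2 : (2:R) != 0 by rewrite pnatr_eq0.
have h8 : (8:R) != 0 by rewrite pnatr_eq0.
by field.
Qed.

(* Gap to the value (l3-1)^2 + (l1-l2)^2/2, attained at (c, c, 1) when
   (l1 + l2) c = 2. *)
Lemma Wdiag_min_gap x y z :
  Wdiag x y z - ((l3 - 1)^+2 + 2^-1 * (l1 - l2)^+2) =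
  2^-1 * (l1 * x + l2 * y + l3 * z - l3 - 2)^+2
  + 2^-1 * ((l1 - l3) * (l2 + l3) * wt1 x y z + (l2 - l3) * (l1 + l3) * wt2 x y z).
Proof.
rewrite /Wdiag /wt1 /wt2.
have h2 : (2:R) != 0 by rewrite pnatr_eq0.
by field.
Qed.

(* Gap to the value (l1-1)^2 + (l2-1)^2 + (l3-1)^2 = Wdiag(1,1,1). *)
Lemma Wdiag_id_gap x y z :
  Wdiag x y z - ((l1 - 1)^+2 + (l2 - 1)^+2 + (l3 - 1)^+2) =
  2^-1 * (l1 + l2 + l3 - (l1 * x + l2 * y + l3 * z))^+2
  + (2 - (l1 + l2)) * (l1 + l2 + l3 - (l1 * x + l2 * y + l3 * z))
  + 2^-1 * ((l1 - l3) * (l2 + l3) * wt1 x y z + (l2 - l3) * (l1 + l3) * wt2 x y z).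
Proof.
rewrite /Wdiag /wt1 /wt2.
have h2 : (2:R) != 0 by rewrite pnatr_eq0.
by field.
Qed.

Lemma Wdiag_min_large_value : l1 + l2 != 0 ->
  Wdiag (2 / (l1 + l2)) (2 / (l1 + l2)) 1 = (l3 - 1)^+2 + 2^-1 * (l1 - l2)^+2.
Proof.
move=> pn; rewrite /Wdiag.
have h2 : (2:R) != 0 by rewrite pnatr_eq0.
by field.
Qed.

Lemma excess_wt x y z :
  2 * (l1 + l2 + l3 - (l1 * x + l2 * y + l3 * z)) =
  (l2 + l3) * wt1 x y z + (l1 + l3) * wt2 x y z + (l1 + l2) * wt3 x y z.
Proof. by rewrite /wt1 /wt2 /wt3; ring. Qed.

End DiagonalTarget.

Lemma pos_mul_eq0 (R : numDomainType) (p w : R) : 0 < p -> p * w = 0 -> w = 0.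
Proof. by move=> p0 /eqP; rewrite mulf_eq0 gt_eqF // => /eqP. Qed.

Local Ltac nonneg :=
  repeat first [ exact: sqr_ge0 | by rewrite invr_ge0 ler0n | lra
               | apply: addr_ge0 | apply: mulr_ge0 ].

Section Extrema.
Variables (R : rcfType) (l1 l2 l3 : R).
Implicit Types (x y z : R).
Local Notation Wdiag := (Wdiag l1 l2 l3).

Lemma Wdiag_le_max x y z : l2 < l1 -> l3 < l2 -> 0 < l3 -> tetra x y z ->
  Wdiag x y z <= (l1 + 1)^+2 + (l2 + 1)^+2 + (l3 - 1)^+2.
Proof. by move=> ? ? ? [*]; rewrite -subr_ge0 Wdiag_max_gap; nonneg. Qed.

Lemma Wdiag_eq_max x y z : l2 < l1 -> l3 < l2 -> 0 < l3 -> tetra x y z ->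
  Wdiag x y z = (l1 + 1)^+2 + (l2 + 1)^+2 + (l3 - 1)^+2 ->
  [/\ x = -1, y = -1 & z = 1].
Proof.
move=> h12 h23 h3 [w0 w1 w2 w3] heq.
have := Wdiag_max_gap l1 l2 l3 x y z; rewrite heq subrr; set S := 8^-1 * _ => gap.
have S0 : 0 <= S by rewrite /S; nonneg.
have t0 : 0 <= (l1 + l2) * wt0 x y z by nonneg.
have t1 : 0 <= (l1 - l3) * wt1 x y z by nonneg.
have t2 : 0 <= (l2 - l3) * wt2 x y z by nonneg.
have z0 : wt0 x y z = 0 by apply: (pos_mul_eq0 (p := l1 + l2)); lra.
have z1 : wt1 x y z = 0 by apply: (pos_mul_eq0 (p := l1 - l3)); lra.
have z2 : wt2 x y z = 0 by apply: (pos_mul_eq0 (p := l2 - l3)); lra.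
by move: z0 z1 z2; rewrite /wt0 /wt1 /wt2 => *; split; lra.
Qed.

Lemma Wdiag_ge_min_large x y z : l2 < l1 -> l3 < l2 -> 0 < l3 -> tetra x y z ->
  (l3 - 1)^+2 + 2^-1 * (l1 - l2)^+2 <= Wdiag x y z.
Proof. by move=> ? ? ? [*]; rewrite -subr_ge0 Wdiag_min_gap; nonneg. Qed.

Lemma Wdiag_eq_min_large x y z : l2 < l1 -> l3 < l2 -> 0 < l3 -> 2 < l1 + l2 ->
  tetra x y z ->
  Wdiag x y z = (l3 - 1)^+2 + 2^-1 * (l1 - l2)^+2 ->
  [/\ x = 2 / (l1 + l2), y = 2 / (l1 + l2) & z = 1].
Proof.
move=> h12 h23 h3 hl [w0 w1 w2 w3] heq.
have := Wdiag_min_gap l1 l2 l3 x y z; rewrite heq subrr => gap.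
have sq0 := sqr_ge0 (l1 * x + l2 * y + l3 * z - l3 - 2).
have t1 : 0 <= (l1 - l3) * (l2 + l3) * wt1 x y z by nonneg.
have t2 : 0 <= (l2 - l3) * (l1 + l3) * wt2 x y z by nonneg.
have z1 : wt1 x y z = 0.
  by apply: (pos_mul_eq0 (p := (l1 - l3) * (l2 + l3))); [apply: mulr_gt0 | ]; lra.
have z2 : wt2 x y z = 0.
  by apply: (pos_mul_eq0 (p := (l2 - l3) * (l1 + l3))); [apply: mulr_gt0 | ]; lra.
have /eqP : (l1 * x + l2 * y + l3 * z - l3 - 2)^+2 = 0 by lra.
rewrite sqrf_eq0 => /eqP lin.
move: z1 z2; rewrite /wt1 /wt2 => z1 z2.
have zz : z = 1 by lra.
have yx : y = x by lra.
have hx : x = 2 / (l1 + l2).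
  have pn : l1 + l2 != 0 by rewrite gt_eqF //; lra.
  have px : (l1 + l2) * x = 2 by rewrite yx zz in lin; lra.
  by rewrite -px; field.
by split; rewrite ?yx.
Qed.

Lemma Wdiag_ge_min_small x y z : l2 < l1 -> l3 < l2 -> 0 < l3 -> l1 + l2 <= 2 ->
  tetra x y z ->
  (l1 - 1)^+2 + (l2 - 1)^+2 + (l3 - 1)^+2 <= Wdiag x y z.
Proof.
move=> h12 h23 h3 hl [w0 w1 w2 w3].
have hl' : 0 <= 2 - (l1 + l2) by lra.
have ex : 0 <= l1 + l2 + l3 - (l1 * x + l2 * y + l3 * z).
  by rewrite -(pmulr_rge0 _ (ltr0n _ 2)) excess_wt; nonneg.
by rewrite -subr_ge0 Wdiag_id_gap; nonneg.
Qed.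

Lemma Wdiag_eq_min_small x y z : l2 < l1 -> l3 < l2 -> 0 < l3 -> l1 + l2 <= 2 ->
  tetra x y z -> Wdiag x y z = (l1 - 1)^+2 + (l2 - 1)^+2 + (l3 - 1)^+2 ->
  [/\ x = 1, y = 1 & z = 1].
Proof.
move=> h12 h23 h3 hl [w0 w1 w2 w3] heq.
have hl' : 0 <= 2 - (l1 + l2) by lra.
have := excess_wt l1 l2 l3 x y z; set E := _ - _ => exE.
have t1 : 0 <= (l2 + l3) * wt1 x y z by nonneg.
have t2 : 0 <= (l1 + l3) * wt2 x y z by nonneg.
have t3 : 0 <= (l1 + l2) * wt3 x y z by nonneg.
have E0 : 0 <= E by lra.
have := Wdiag_id_gap l1 l2 l3 x y z; rewrite heq subrr -/E => gap.
have u1 : 0 <= (l1 - l3) * (l2 + l3) * wt1 x y z by nonneg.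
have u2 : 0 <= (l2 - l3) * (l1 + l3) * wt2 x y z by nonneg.
have u3 : 0 <= (2 - (l1 + l2)) * E by nonneg.
have /eqP : E^+2 = 0 by have := sqr_ge0 E; lra.
rewrite sqrf_eq0 => /eqP E_0.
have z1 : wt1 x y z = 0 by apply: (pos_mul_eq0 (p := l2 + l3)); lra.
have z2 : wt2 x y z = 0 by apply: (pos_mul_eq0 (p := l1 + l3)); lra.
have z3 : wt3 x y z = 0 by apply: (pos_mul_eq0 (p := l1 + l2)); lra.
by move: z1 z2 z3; rewrite /wt1 /wt2 /wt3 => *; split; lra.
Qed.

End Extrema.

Section GlobalExtrema.
Variable R : rcfType.
Implicit Types (D Q : 'M[R]_3) (m : R).

Lemma isGlobalMin_charac D m (E : 'M[R]_3 -> Prop) (Q0 : 'M[R]_3) : E Q0 ->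
  (forall Q, E Q -> SO3 Q /\ W10 D Q = m) ->
  (forall Q, SO3 Q -> m <= W10 D Q) ->
  (forall Q, SO3 Q -> W10 D Q = m -> E Q) ->
  forall Q, isGlobalMin D Q <-> E Q.
Proof.
move=> EQ0 hE hge heq Q; split.
  case=> HQ Hmin; apply: heq => //; have [SQ0 WQ0] := hE _ EQ0.
  by apply/eqP; rewrite eq_le hge // andbT -WQ0 Hmin.
by move=> /hE[HQ WQ]; split=> // S /hge; rewrite WQ.
Qed.

Lemma isGlobalMax_charac D m (E : 'M[R]_3 -> Prop) (Q0 : 'M[R]_3) : E Q0 ->
  (forall Q, E Q -> SO3 Q /\ W10 D Q = m) ->
  (forall Q, SO3 Q -> W10 D Q <= m) ->
  (forall Q, SO3 Q -> W10 D Q = m -> E Q) ->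
  forall Q, isGlobalMax D Q <-> E Q.
Proof.
move=> EQ0 hE hle heq Q; split.
  case=> HQ Hmax; apply: heq => //; have [SQ0 WQ0] := hE _ EQ0.
  by apply/eqP; rewrite eq_le hle //= -WQ0 Hmax.
by move=> /hE[HQ WQ]; split=> // S /hle; rewrite WQ.
Qed.

End GlobalExtrema.

Section ThreeCases.
Variables (R : rcfType) (l1 l2 l3 : R).
Implicit Types (Q : 'M[R]_3).
Local Notation D := (mx3 l1 0 0 0 l2 0 0 0 l3).
Local Notation flip := (mx3 (-1) 0 0 0 (-1) 0 0 0 1 : 'M[R]_3).
Local Notation Wmax := ((l1 + 1)^+2 + (l2 + 1)^+2 + (l3 - 1)^+2).
Local Notation c := (2 / (l1 + l2)).
Local Notation s := (Num.sqrt (1 - c^+2)).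
Local Notation Wmin := ((l3 - 1)^+2 + 2^-1 * (l1 - l2)^+2).
Local Notation Wid := ((l1 - 1)^+2 + (l2 - 1)^+2 + (l3 - 1)^+2).

Lemma flip_value : SO3 flip /\ W10 D flip = Wmax.
Proof.
split; first by apply/SO3_mx3; split; [ring.. | split; ring].
rewrite W10_diag_mx3.
have h2 : (2:R) != 0 by rewrite pnatr_eq0.
by field.
Qed.

Lemma W10_le_max Q : l2 < l1 -> l3 < l2 -> 0 < l3 -> SO3 Q -> W10 D Q <= Wmax.
Proof.
move=> h12 h23 h3; elim/mx3_ind: Q => a b c d e f g h k HQ.
by rewrite W10_rot //; apply: Wdiag_le_max (rot_diag_tetra HQ).
Qed.

Lemma W10_eq_max Q : l2 < l1 -> l3 < l2 -> 0 < l3 -> SO3 Q -> W10 D Q = Wmax ->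
  Q = flip.
Proof.
move=> h12 h23 h3; elim/mx3_ind: Q => a b c d e f g h k HQ.
rewrite W10_rot // => /(Wdiag_eq_max h12 h23 h3 (rot_diag_tetra HQ))[ea ee ek].
move: HQ; rewrite ea ee ek => HQ.
by rewrite (rot_diag_unit HQ) // ?sqrrN expr1n.
Qed.

Lemma axis3_minimizers : 2 < l1 + l2 -> forall Q,
  Q = mx3 c (- s) 0 s c 0 0 0 1 \/ Q = mx3 c s 0 (- s) c 0 0 0 1 ->
  SO3 Q /\ W10 D Q = Wmin.
Proof.
move=> hl; have pn : l1 + l2 != 0 by rewrite gt_eqF //; lra.
have c0 : 0 <= c by apply: divr_ge0; lra.
have c1 : c <= 1 by rewrite ler_pdivrMr; lra.
have cs : c^+2 + s^+2 = 1 by rewrite sqr_sqrtr ?subr_ge0 ?exprn_ile1 //; ring.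
have [Sp Sm] := SO3_axis3 cs.
by move=> Q [] ->; rewrite W10_rot // Wdiag_min_large_value.
Qed.

Lemma W10_ge_min_large Q : l2 < l1 -> l3 < l2 -> 0 < l3 -> SO3 Q ->
  Wmin <= W10 D Q.
Proof.
move=> h12 h23 h3; elim/mx3_ind: Q => a b c d e f g h k HQ.
by rewrite W10_rot //; apply: Wdiag_ge_min_large (rot_diag_tetra HQ).
Qed.

Lemma W10_eq_min_large Q : l2 < l1 -> l3 < l2 -> 0 < l3 -> 2 < l1 + l2 ->
  SO3 Q -> W10 D Q = Wmin ->
  Q = mx3 c (- s) 0 s c 0 0 0 1 \/ Q = mx3 c s 0 (- s) c 0 0 0 1.
Proof.
move=> h12 h23 h3 hl; elim/mx3_ind: Q => a b c d e f g h k HQ.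
rewrite W10_rot // => /(Wdiag_eq_min_large h12 h23 h3 hl (rot_diag_tetra HQ)).
case=> ea ee ek.
by have := rot_axis3 HQ (etrans ee (esym ea)) ek; rewrite ea.
Qed.

Lemma id_value : SO3 (1%:M : 'M[R]_3) /\ W10 D 1%:M = Wid.
Proof.
rewrite one_mx3; split; first by apply/SO3_mx3; split; [ring.. | split; ring].
rewrite W10_diag_mx3.
have h2 : (2:R) != 0 by rewrite pnatr_eq0.
by field.
Qed.

Lemma W10_ge_id Q : l2 < l1 -> l3 < l2 -> 0 < l3 -> l1 + l2 <= 2 ->
  SO3 Q -> Wid <= W10 D Q.
Proof.
move=> h12 h23 h3 hl; elim/mx3_ind: Q => a b c d e f g h k HQ.
by rewrite W10_rot //; apply: Wdiag_ge_min_small (rot_diag_tetra HQ).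
Qed.

Lemma W10_eq_id Q : l2 < l1 -> l3 < l2 -> 0 < l3 -> l1 + l2 <= 2 ->
  SO3 Q -> W10 D Q = Wid -> Q = 1%:M.
Proof.
move=> h12 h23 h3 hl; elim/mx3_ind: Q => a b c d e f g h k HQ.
rewrite W10_rot // => /(Wdiag_eq_min_small h12 h23 h3 hl (rot_diag_tetra HQ)).
case=> ea ee ek.
move: HQ; rewrite ea ee ek => HQ.
by rewrite (rot_diag_unit HQ) ?expr1n // one_mx3.
Qed.

End ThreeCases.

Theorem mainTheorem9 (R : rcfType) (l1 l2 l3 : R)
  (h12 : l2 < l1) (h23 : l3 < l2) (h3 : 0 < l3) :
  let D := mx3 l1 0 0  0 l2 0  0 0 l3 in
  (* (i) *)
  (forall Q : 'M[R]_3,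
     isGlobalMax D Q <-> Q = mx3 (-1) 0 0  0 (-1) 0  0 0 1)
  /\
  (* (ii) *)
  (2 < l1 + l2 ->
     let c := 2 / (l1 + l2) in
     let s := Num.sqrt (1 - c ^+ 2) in
     let Qp := mx3 c (- s) 0  s c 0  0 0 1 in
     let Qm := mx3 c s 0  (- s) c 0  0 0 1 in
     (forall Q : 'M[R]_3, isGlobalMin D Q <-> (Q = Qp \/ Q = Qm))
     /\ W10 D Qp = (l3 - 1) ^+ 2 + 2^-1 * (l1 - l2) ^+ 2
     /\ W10 D Qm = (l3 - 1) ^+ 2 + 2^-1 * (l1 - l2) ^+ 2)
  /\
  (* (iii) *)
  (l1 + l2 <= 2 ->
     forall Q : 'M[R]_3, isGlobalMin D Q <-> Q = 1%:M).
Proof.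
move=> D; split; [|split].
- apply: (isGlobalMax_charac (Q0 := mx3 (-1) 0 0 0 (-1) 0 0 0 1)) => // [Q ->|Q|Q].
  + exact: flip_value.
  + exact: W10_le_max.
  + exact: W10_eq_max.
- move=> hl c s Qp Qm; have hE := axis3_minimizers l3 hl.
  split; last by split; [exact: (hE Qp (or_introl erefl)).2
                        | exact: (hE Qm (or_intror erefl)).2].
  apply: (isGlobalMin_charac (Q0 := Qp) _ hE) => [|Q|Q]; first by left.
  + exact: W10_ge_min_large.
  + exact: W10_eq_min_large.
- move=> hl; apply: (isGlobalMin_charac (Q0 := 1%:M)) => // [Q ->|Q|Q].
  + exact: id_value.
  + exact: W10_ge_id.
  + exact: W10_eq_id.
Qed.
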